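(* Let $\phi,\varphi\in\mathrm{Stab}_N(\mathbf{Q}_2)$, $x\in\mathbf{Q}_2$ and $v,w\in V$. Then: (1) if $vx=wx$, then $\log_2((\varphi^{-1}v\varphi)'(\varphi^{-1}x))-\log_2(v'(x))=\log_2((\varphi^{-1}w\varphi)'(\varphi^{-1}x))-\log_2(w'(x))$; (2) for $y\in\mathbf{Q}_2$ and $u\in V$ with $u0=y$, the quantity $\gamma_\varphi(y):=\log_2((\varphi^{-1}u\varphi)'(\varphi^{-1}0))-\log_2(u'(0))$ does not depend on the choice of $u$, hence defines a map $\gamma_\varphi:\mathbf{Q}_2\to\mathbf Z$; (3) $\gamma_\varphi(vx)-\gamma_\varphi(x)=\log_2((\varphi^{-1}v\varphi)'(\varphi^{-1}x))-\log_2(v'(x))$; (4) $\gamma_{\phi\varphi}=\gamma_\phi+\gamma_\varphi^\phi-\gamma_\varphi(\phi^{-1}(0))$, where $\gamma_\varphi^\phi(y)=\gamma_\varphi(\phi^{-1}y)$.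
   Context: Cantor space $\mathfrak C=\{0,1\}^{\mathbf N}$; $C_m=\{m\cdot x\}$. Thompson's group $V$: homeomorphisms $v$ with $v(m_kx)=m'_kx$ for partitions $\mathfrak C=\bigsqcup C_{m_k}=\bigsqcup C_{m'_k}$; slope $v'(x)=2^{|m_k|-|m'_k|}$ on $C_{m_k}$. $\mathbf{Q}_2\subset\mathfrak C$: eventually-zero sequences; $0$ denotes the zero sequence; $V$ acts transitively on $\mathbf{Q}_2$. $\mathrm{Stab}_N(\mathbf{Q}_2)=\{\varphi\in\mathrm{Homeo}(\mathfrak C):\varphi V\varphi^{-1}=V,\ \varphi(\mathbf{Q}_2)=\mathbf{Q}_2\}$. *)

From mathcomp Require Import all_boot all_algebra.
From Stdlib Require Import ClassicalEpsilon.
Set Implicit Arguments. Unset Strict Implicit. Unset Printing Implicit Defensive.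
Import GRing.Theory Num.Theory.

Definition C := nat -> bool.
Definition word := seq bool.

Definition zero : C := fun _ => false.

Definition Q2 (x : C) : Prop := exists N, forall n, (N <= n)%N -> x n = false.

Definition wcat (m : word) (x : C) : C :=
  fun n => if (n < size m)%N then nth false m n else x (n - size m)%N.

Definition prefixb (m : word) (x : C) : bool :=
  all (fun i => x i == nth false m i) (iota 0 (size m)).

Definition is_cyl_partition (ms : seq word) : Prop :=
  forall x : C, count (fun m => prefixb m x) ms = 1%N.

(* p = [(m_1,m'_1); ...] witnesses v(m_k x) = m'_k x for partitions
   C = |_| C_{m_k} = |_| C_{m'_k} *)
Definition V_data (v : C -> C) (p : seq (word * word)) : Prop :=
  [/\ is_cyl_partition (map fst p), is_cyl_partition (map snd p) &
      forall q, q \in p -> forall y, v (wcat q.1 y) = wcat q.2 y].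

Definition inV (v : C -> C) : Prop := exists p, V_data v p.

(* logslope v x = log_2 (v'(x)) = |m_k| - |m'_k| for the k with x in C_{m_k},
   computed from a chosen defining pair of partitions (0 if v is not in V). *)
Definition logslope (v : C -> C) (x : C) : int :=
  match excluded_middle_informative (inV v) with
  | left H =>
      let p := proj1_sig (constructive_indefinite_description _ H) in
      let q := nth ([::], [::]) p (find (fun q => prefixb q.1 x) p) in
      (size q.1)%:Z - (size q.2)%:Z
  | right _ => 0
  end.

Definition ccontinuous (f : C -> C) : Prop :=
  forall (x : C) (n : nat), exists N : nat, forall y : C,
    (forall i, (i < N)%N -> x i = y i) -> forall i, (i < n)%N -> f x i = f y i.

Record homeo := Homeo {
  hfun : C -> C;
  hinv : C -> C;
  hK : cancel hfun hinv;
  hKinv : cancel hinv hfun;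
  hcont : ccontinuous hfun;
  hinvcont : ccontinuous hinv }.

Lemma ccontinuous_comp (f g : C -> C) :
  ccontinuous f -> ccontinuous g -> ccontinuous (fun x => f (g x)).
Proof.
move=> cf cg x n; have [N HN] := cf (g x) n; have [M HM] := cg x N.
by exists M => y hy i hi; apply: HN => // j hj; apply: HM.
Qed.

Definition hcomp (phi psi : homeo) : homeo :=
  @Homeo (fun x => hfun phi (hfun psi x)) (fun x => hinv psi (hinv phi x))
    (can_comp (hK phi) (hK psi)) (can_comp (hKinv psi) (hKinv phi))
    (ccontinuous_comp (hcont phi) (hcont psi))
    (ccontinuous_comp (hinvcont psi) (hinvcont phi)).

Definition StabN (phi : homeo) : Prop :=
  (forall w : C -> C, inV w <->
     exists v, inV v /\ forall x, w x = hfun phi (v (hinv phi x))) /\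
  (forall y : C, Q2 y <-> exists x, Q2 x /\ hfun phi x = y).

Definition conjh (phi : homeo) (v : C -> C) : C -> C :=
  fun x => hinv phi (v (hfun phi x)).

Definition Delta (phi : homeo) (v : C -> C) (x : C) : int :=
  logslope (conjh phi v) (hinv phi x) - logslope v x.

Definition gamma (phi : homeo) (y : C) : int :=
  match excluded_middle_informative (exists u, inV u /\ u zero = y) with
  | left H => Delta phi (proj1_sig (constructive_indefinite_description _ H)) zero
  | right _ => 0
  end.

From mathcomp Require Import all_boot all_order all_algebra zify.
Import Order.TTheory GRing.Theory Num.Theory.
From Stdlib Require Import FunctionalExtensionality ClassicalEpsilon.
Set Implicit Arguments. Unset Strict Implicit. Unset Printing Implicit Defensive.

(* The log-slope of a map at x is read off any cylinder map  w y |-> w' y  around x, so it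
   only depends on the germ at x; conversely, two maps with the same value and the same
   log-slope at x have the same germ there.  For x in Q2 pick t in V fixing x with
   log-slope 1.  Comparing the germs of f o t^n and g o t^m and conjugating by phi shows
   that conjugation multiplies log-slopes at fixed points by the log-slope s of
   phi^-1 t phi at phi^-1 x.  The same argument for phi^-1 gives s = 1 or s = -1, and
   s = -1 would turn the repelling fixed point x of t into an attracting one.  So
   conjugation preserves differences of log-slopes, which is (1); (2)-(4) are cocycle
   computations. *)

Definition sdrop (n : nat) (z : C) : C := fun i => z (i + n).

Definition agree (n : nat) (z x : C) := forall i, i < n -> z i = x i.

Lemma agree_le m n z x : m <= n -> agree n z x -> agree m z x.
Proof. by move=> hmn h i hi; apply: h; apply: leq_trans hmn. Qed.

Lemma wcat_cat a b y : wcat (a ++ b) y = wcat a (wcat b y).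
Proof.
apply: functional_extensionality => i; rewrite /wcat size_cat nth_cat.
case: (ltnP i (size a)) => h1; first by have -> : i < size a + size b by lia.
case: (ltnP i (size a + size b)) => h2; first by have -> : i - size a < size b by lia.
have -> : i - size a < size b = false by lia.
by rewrite subnDA.
Qed.

Lemma sdrop_wcat a y : sdrop (size a) (wcat a y) = y.
Proof.
apply: functional_extensionality => i; rewrite /sdrop /wcat.
have -> : i + size a < size a = false by lia.
by rewrite addnK.
Qed.

Lemma prefixbP a x :
  reflect (forall i, i < size a -> x i = nth false a i) (prefixb a x).
Proof.
apply: (iffP allP) => h; first by move=> i hi; apply/eqP/h; rewrite mem_iota.
by move=> i; rewrite mem_iota => /andP[_ hi]; apply/eqP/h.
Qed.

Lemma prefixb_wcat a y : prefixb a (wcat a y).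
Proof. by apply/prefixbP => i hi; rewrite /wcat hi. Qed.

Lemma wcat_sdrop a x : prefixb a x -> wcat a (sdrop (size a) x) = x.
Proof.
move/prefixbP=> h; apply: functional_extensionality => i; rewrite /wcat /sdrop.
by case: ltnP => hi; [rewrite h | rewrite subnK].
Qed.

Lemma prefixb_cat a s y : prefixb s y -> prefixb (a ++ s) (wcat a y).
Proof. by move/wcat_sdrop <-; rewrite -wcat_cat prefixb_wcat. Qed.

Lemma prefixb_agree a x z : prefixb a x -> agree (size a) z x -> prefixb a z.
Proof. by move=> /prefixbP h hz; apply/prefixbP => i hi; rewrite hz // h. Qed.

Lemma agree_wcat a x y : prefixb a x -> agree (size a) (wcat a y) x.
Proof. by move=> /prefixbP h i hi; rewrite /wcat hi h. Qed.

Lemma prefixb_inj a c x : prefixb a x -> prefixb c x -> size a = size c -> a = c.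
Proof.
move=> /prefixbP ha /prefixbP hc e; apply: (eq_from_nth (x0 := false)) => // i hi.
by rewrite -ha // hc // -e.
Qed.

Lemma prefixb_mkseq y n : prefixb (mkseq y n) y.
Proof. by apply/prefixbP => i; rewrite size_mkseq => hi; rewrite nth_mkseq. Qed.

Lemma wcat_size c d : (forall y, wcat c y = wcat d y) -> size c = size d.
Proof.
wlog lt_cd : c d / size c < size d.
  move=> H e; case: (ltngtP (size c) (size d)) => // hcd; first exact: H.
  by apply/esym/H => // y; rewrite e.
pose y : C := fun i => ~~ nth false d (i + size c).
move/(_ y)/(congr1 (fun f => f (size c))).
by rewrite /wcat ltnn lt_cd subnn /y add0n; case: (nth false d (size c)).
Qed.

Definition cylmap (f : C -> C) (a b : word) := forall y, f (wcat a y) = wcat b y.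

Lemma cylmap_cat f a b s : cylmap f a b -> cylmap f (a ++ s) (b ++ s).
Proof. by move=> h y; rewrite !wcat_cat h. Qed.

Lemma cylmap_apply f a b x : prefixb a x -> cylmap f a b ->
  f x = wcat b (sdrop (size a) x).
Proof. by move=> /wcat_sdrop {1}<- ->. Qed.

Lemma cylmap_inj f a b z1 z2 : cylmap f a b -> prefixb a z1 -> prefixb a z2 ->
  f z1 = f z2 -> z1 = z2.
Proof.
move=> h p1 p2; rewrite (cylmap_apply p1 h) (cylmap_apply p2 h).
move/(congr1 (sdrop (size b))); rewrite !sdrop_wcat => e.
by rewrite -(wcat_sdrop p1) e wcat_sdrop.
Qed.

Lemma cylmap_extend f a b x n : prefixb a x -> cylmap f a b ->
  exists s, [/\ size s = n, prefixb (a ++ s) x & prefixb (b ++ s) (f x)].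
Proof.
move=> pa h; exists (mkseq (sdrop (size a) x) n); rewrite size_mkseq; split=> //.
  by rewrite -{2}(wcat_sdrop pa); apply/prefixb_cat/prefixb_mkseq.
by rewrite (cylmap_apply pa h); apply/prefixb_cat/prefixb_mkseq.
Qed.

Definition locally_eq (f g : C -> C) (x : C) :=
  exists n, forall z, agree n z x -> f z = g z.

Lemma cylmap_locally_eq f g a b x : prefixb a x -> cylmap f a b -> cylmap g a b ->
  locally_eq f g x.
Proof.
move=> pa hf hg; exists (size a) => z /(prefixb_agree pa) pz.
by rewrite (cylmap_apply pz hf) (cylmap_apply pz hg).
Qed.

Definition local_slope (f : C -> C) (x : C) (k : int) : Prop :=
  exists a b, [/\ prefixb a x, ((size a)%:Z - (size b)%:Z)%R = k & cylmap f a b].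

Lemma local_slope_uniq f x k1 k2 :
  local_slope f x k1 -> local_slope f x k2 -> k1 = k2.
Proof.
move=> [a1 [b1 [pa1 <- f1]]] [a2 [b2 [pa2 <- f2]]].
have [s1 [hs1 ps1 _]] := cylmap_extend (size a2 - size a1) pa1 f1.
have [s2 [hs2 ps2 _]] := cylmap_extend (size a1 - size a2) pa2 f2.
have e : a1 ++ s1 = a2 ++ s2 by apply: prefixb_inj ps1 ps2 _; rewrite !size_cat; lia.
have : size (b1 ++ s1) = size (b2 ++ s2).
  by apply: wcat_size => y; rewrite -(cylmap_cat s1 f1) -(cylmap_cat s2 f2) e.
rewrite !size_cat; lia.
Qed.

Lemma local_slope_germ f g x k : local_slope f x k -> local_slope g x k ->
  f x = g x -> locally_eq f g x.
Proof.
move=> [a1 [b1 [pa1 e1 f1]]] [a2 [b2 [pa2 e2 g2]]] fg.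
have [s1 [hs1 ps1 qs1]] := cylmap_extend (size a2 - size a1) pa1 f1.
have [s2 [hs2 ps2 qs2]] := cylmap_extend (size a1 - size a2) pa2 g2.
have ea : a1 ++ s1 = a2 ++ s2 by apply: prefixb_inj ps1 ps2 _; rewrite !size_cat; lia.
have eb : b1 ++ s1 = b2 ++ s2.
  by apply: prefixb_inj qs1 _ _; rewrite ?fg // !size_cat; lia.
apply: (cylmap_locally_eq ps1 (cylmap_cat s1 f1)).
by rewrite ea eb; apply: cylmap_cat.
Qed.

Lemma local_slope_comp f g x k1 k2 :
  local_slope f x k1 -> local_slope g (f x) k2 -> local_slope (g \o f) x (k1 + k2)%R.
Proof.
move=> [a [b [pa <- hf]]] [c [d [pc <- hg]]].
have [s [hs ps qs]] := cylmap_extend (size c - size b) pa hf.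
have [u [hu pu _]] := cylmap_extend (size b - size c) pc hg.
have e : b ++ s = c ++ u by apply: prefixb_inj qs pu _; rewrite !size_cat; lia.
exists (a ++ s), (d ++ u); split=> //; first by rewrite !size_cat; lia.
by move=> y /=; rewrite (cylmap_cat s hf) e (cylmap_cat u hg).
Qed.

Lemma local_slope_locally_eq f g x k : locally_eq f g x ->
  local_slope f x k -> local_slope g x k.
Proof.
move=> [n hn] [a [b [pa <- hf]]].
have [s [hs ps _]] := cylmap_extend n pa hf.
exists (a ++ s), (b ++ s); split=> //; first by rewrite !size_cat; lia.
move=> y; rewrite -(cylmap_cat s hf) hn //.
by apply: agree_le (agree_wcat y ps); rewrite size_cat hs leq_addl.
Qed.

Lemma iter_fixed (T : Type) (f : T -> T) x n : f x = x -> iter n f x = x.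
Proof. by move=> fx; elim: n => //= n ->. Qed.

Lemma local_slope_iter f x k n : f x = x -> local_slope f x k ->
  local_slope (iter n f) x (n%:Z * k)%R.
Proof.
move=> fx hf; elim: n => [|n IH]; first by exists [::], [::]; rewrite mul0r.
have := local_slope_comp IH; rewrite iter_fixed // => /(_ _ _ hf).
rewrite -addn1 PoszD mulrDl mul1r addn1; apply.
Qed.

Lemma logslopeP v x : inV v -> local_slope v x (logslope v x).
Proof.
move=> Hv; rewrite /logslope; case: excluded_middle_informative => // H.
set p := proj1_sig _.
have [h1 _ h3] : V_data v p := proj2_sig (constructive_indefinite_description _ H).
have hp : has (fun q : word * word => prefixb q.1 x) p.
  by rewrite has_count; have := h1 x; rewrite count_map => ->.
set q := nth _ _ _; exists q.1, q.2; split=> //; first exact: (nth_find ([::], [::]) hp).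
by move=> y; apply/h3/mem_nth; rewrite -has_find.
Qed.

Lemma Q2_zero : Q2 zero.
Proof. by exists 0. Qed.

Lemma Q2P x : Q2 x -> exists w, x = wcat w zero.
Proof.
move=> [N hN]; exists (mkseq x N); apply: functional_extensionality => i.
rewrite /wcat size_mkseq; case: ltnP => hi; first by rewrite nth_mkseq.
by rewrite hN.
Qed.

Lemma inV_Q2 v x : inV v -> Q2 x -> Q2 (v x).
Proof.
move=> Hv [N hN]; have [a [b [pa _ hv]]] := logslopeP x Hv.
rewrite (cylmap_apply pa hv); exists (size b + N) => n hn.
by rewrite /wcat ltnNge (leq_trans (leq_addr _ _) hn) /sdrop hN //; lia.
Qed.

Definition vfun (p : seq (word * word)) (z : C) : C :=
  let q := nth ([::], [::]) p (find (fun q : word * word => prefixb q.1 z) p) in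
  wcat q.2 (sdrop (size q.1) z).

Lemma nth_find_count1 (T : eqType) (P : pred T) (s : seq T) (q x0 : T) :
  count P s = 1 -> q \in s -> P q -> nth x0 s (find P s) = q.
Proof.
move=> hc hq Pq; move: hq hc => /splitPr[s1 s2]; rewrite count_cat /= Pq => h.
have s1P : ~~ has P s1 by rewrite has_count; lia.
by rewrite find_cat (negbTE s1P) /= Pq addn0 nth_cat ltnn subnn.
Qed.

Lemma vfun_wcat p q y : is_cyl_partition (map fst p) -> q \in p ->
  vfun p (wcat q.1 y) = wcat q.2 y.
Proof.
move=> hp hq; rewrite /vfun (nth_find_count1 _ _ hq) ?prefixb_wcat ?sdrop_wcat //.
by have := hp (wcat q.1 y); rewrite count_map.
Qed.

Lemma inV_vfun p : is_cyl_partition (map fst p) -> is_cyl_partition (map snd p) ->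
  inV (vfun p).
Proof. by move=> h1 h2; exists p; split=> // q hq y; apply: vfun_wcat. Qed.

Lemma prefixb_cons b m z : prefixb (b :: m) z = (z 0 == b) && prefixb m (sdrop 1 z).
Proof.
apply/prefixbP/andP => [h|[/eqP h0 /prefixbP h]].
  by split; [apply/eqP/h | apply/prefixbP => i hi; rewrite /sdrop addn1 h].
by case=> [|i] hi //=; rewrite -h // /sdrop addn1.
Qed.

Lemma prefixb_rcons m b z : prefixb (rcons m b) z = prefixb m z && (z (size m) == b).
Proof.
rewrite /prefixb size_rcons -addn1 iotaD all_cat /= andbT add0n nth_rcons ltnn eqxx.
congr andb; apply: eq_in_all => i; rewrite mem_iota => /andP[_ hi].
by rewrite nth_rcons hi.
Qed.

(* The cylinders branching off the path from the root to C_w. *)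
Fixpoint siblings (w : word) : seq word :=
  if w is b :: w' then [:: ~~ b] :: map (cons b) (siblings w') else [::].

Lemma size_siblings w : size (siblings w) = size w.
Proof. by elim: w => //= b w IH; rewrite size_map IH. Qed.

Lemma cyl_partition_siblings w : is_cyl_partition (w :: siblings w).
Proof.
elim: w => [|b w IH] z /=; first by rewrite /prefixb.
rewrite count_map !prefixb_cons /= andbT.
case: (boolP (z 0 == b)) => hb /=.
  have -> : (z 0 == ~~ b) = false by move/eqP: hb => ->; case: b.
  apply: etrans (IH (sdrop 1 z)); rewrite /= add0n; congr addn.
  by apply: eq_count => m /=; rewrite prefixb_cons hb.
have -> : (z 0 == ~~ b) = true by move: hb; case: b; case: (z 0).
rewrite (eq_count (a2 := pred0)) ?count_pred0 // => m.
by rewrite /= prefixb_cons (negbTE hb).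
Qed.

Lemma cyl_partition_split s1 m s2 : is_cyl_partition (s1 ++ m :: s2) ->
  is_cyl_partition (s1 ++ rcons m false :: rcons m true :: s2).
Proof.
move=> h z; have := h z; rewrite !count_cat /= !prefixb_rcons.
by case: (prefixb m z); case: (z (size m)).
Qed.

Lemma wcat_rcons_zero w : wcat (rcons w false) zero = wcat w zero.
Proof.
apply: functional_extensionality => i; rewrite /wcat size_rcons nth_rcons /zero.
case: (ltnP i (size w)) => h; first by rewrite ltnS ltnW.
by case: ifP => //; case: eqP.
Qed.

Lemma wcat_nseq_zero n : wcat (nseq n false) zero = zero.
Proof.
by apply: functional_extensionality => i; rewrite /wcat nth_nseq /zero !if_same.
Qed.

(* For x = w 0^oo: the element of V sending w00 -> w0, w01 -> w10, w1 -> w11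
   and fixing the siblings of w. *)
Lemma Q2_expanding_fixer x : Q2 x ->
  exists t, [/\ inV t, t x = x & local_slope t x 1].
Proof.
move=> /Q2P[w ->]; set w0 := rcons w false; set w1 := rcons w true.
pose p := [:: (rcons w0 false, w0); (rcons w0 true, rcons w1 false); (w1, rcons w1 true)]
          ++ [seq (m, m) | m <- siblings w].
have P1 := cyl_partition_split (s1 := [::]) (cyl_partition_siblings w).
have Pfst : is_cyl_partition (map fst p).
  by rewrite map_cat -map_comp map_id; apply: (cyl_partition_split (s1 := [::]) P1).
have Psnd : is_cyl_partition (map snd p).
  by rewrite map_cat -map_comp map_id; apply: (cyl_partition_split (s1 := [:: w0]) P1).
have ht : cylmap (vfun p) (rcons w0 false) w0.
  by move=> y; apply: (vfun_wcat (q := (rcons w0 false, w0))); rewrite ?mem_head.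
have ex : wcat w zero = wcat (rcons w0 false) zero by rewrite !wcat_rcons_zero.
exists (vfun p); split; first exact: inV_vfun.
  by rewrite ex ht wcat_rcons_zero.
exists (rcons w0 false), w0; split=> //; first by rewrite ex prefixb_wcat.
by rewrite size_rcons; lia.
Qed.

Lemma V_transitive_Q2 y : Q2 y -> exists u, inV u /\ u zero = y.
Proof.
move=> /Q2P[w ->]; set z0 := nseq (size w) false.
pose p := zip (z0 :: siblings z0) (w :: siblings w).
have hs : size (z0 :: siblings z0) = size (w :: siblings w).
  by rewrite /= !size_siblings size_nseq.
have Pfst : is_cyl_partition (map fst p).
  by rewrite -/(unzip1 _) unzip1_zip ?hs //; apply: cyl_partition_siblings.
have Psnd : is_cyl_partition (map snd p).
  by rewrite -/(unzip2 _) unzip2_zip ?hs //; apply: cyl_partition_siblings.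
exists (vfun p); split; first exact: inV_vfun.
by rewrite -{1}(wcat_nseq_zero (size w)) (vfun_wcat (q := (z0, w))) ?mem_head.
Qed.

Lemma hfun_agree (phi : homeo) x n :
  exists M, forall z, agree M z x -> agree n (hfun phi z) (hfun phi x).
Proof.
have [M hM] := hcont phi x n.
by exists M => z hz i hi; apply/esym/hM => // j hj; apply/esym/hz.
Qed.

Lemma conjh_comp (phi : homeo) f g : conjh phi (g \o f) = conjh phi g \o conjh phi f.
Proof. by apply: functional_extensionality => z; rewrite /conjh /= hKinv. Qed.

Lemma hfun_iter_conjh (phi : homeo) f n z :
  hfun phi (iter n (conjh phi f) z) = iter n f (hfun phi z).
Proof. by elim: n => //= n IH; rewrite /conjh hKinv IH. Qed.

Lemma conjh_iter (phi : homeo) f n : conjh phi (iter n f) = iter n (conjh phi f).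
Proof.
apply: functional_extensionality => z.
by rewrite -[RHS](hK phi) hfun_iter_conjh.
Qed.

Lemma conjh_id (phi : homeo) : conjh phi id = id.
Proof. by apply: functional_extensionality => z; rewrite /conjh hK. Qed.

Lemma locally_eq_conjh (phi : homeo) f g x : locally_eq f g x ->
  locally_eq (conjh phi f) (conjh phi g) (hinv phi x).
Proof.
move=> [n hn]; have [M hM] := hfun_agree phi (hinv phi x) n.
by exists M => z /hM; rewrite hKinv => /hn; rewrite /conjh => ->.
Qed.

Lemma StabN_conjh phi v : StabN phi -> inV v -> inV (conjh phi v).
Proof.
move=> [hV _] /hV[v0 [Hv0 e]].
suff -> : conjh phi v = v0 by [].
by apply: functional_extensionality => z; rewrite /conjh e !hK.
Qed.

Lemma StabN_conjh_inv phi v : StabN phi -> inV v ->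
  inV (fun z => hfun phi (v (hinv phi z))).
Proof. by move=> [hV _] Hv; apply/hV; exists v. Qed.

Lemma StabN_Q2 phi x : StabN phi -> Q2 x -> Q2 (hinv phi x).
Proof. by move=> [_ hQ] /hQ[z [hz <-]]; rewrite hK. Qed.

Lemma repelling_fixpoint t x : t x = x -> local_slope t x 1 ->
  exists n, forall z, (forall m, agree n (iter m t z) x) -> z = x.
Proof.
move=> tx [a [b [pa eab ht]]].
have shift z i : agree (size a) z x -> size b <= i -> t z i = z i.+1.
  move=> /(prefixb_agree pa) pz hi.
  rewrite (cylmap_apply pz ht) /wcat ltnNge hi /sdrop; congr z; lia.
have xconst j : x (size b + j) = x (size b).
  by elim: j => [|j IH]; rewrite ?addn0 // -IH addnS -shift ?tx ?leq_addr.
exists (size a) => z hz.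
have orbit m i : size b <= i -> iter m t z i = z (i + m).
  elim: m i => [|m IH] i hi; first by rewrite addn0.
  by rewrite iterS shift // IH ?addSnnS //; exact: ltnW.
apply: functional_extensionality => i.
case: (ltnP i (size a)) => hi; first exact: (hz 0).
rewrite -(subnKC (_ : size b <= i)); last lia.
by rewrite xconst -orbit //; apply: hz; lia.
Qed.

Lemma attracting_fixpoint psi x a b : psi x = x -> prefixb a x -> cylmap psi a b ->
  size a < size b -> forall z j, agree (size a) z x -> agree (size a + j) (iter j psi z) x.
Proof.
move=> psix pa h hab z j hz; elim: j => [|j IH]; first by rewrite addn0.
have pz : prefixb a (iter j psi z).
  by apply: prefixb_agree pa (agree_le _ IH); rewrite leq_addr.
rewrite iterS -psix (cylmap_apply pz h) (cylmap_apply pa h) => i hi.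
rewrite /wcat; case: ltnP => // hbi; rewrite /sdrop IH //; lia.
Qed.

(* A fixed point with positive log-slope is repelling while one with negative log-slope
   is attracting, and a homeomorphism cannot exchange the two. *)
Lemma conjh_slope_nonneg (phi : homeo) t x k : t x = x -> local_slope t x 1 ->
  local_slope (conjh phi t) (hinv phi x) k -> (0 <= k)%R.
Proof.
move=> tx ht [a [b [pa eab hpsi]]]; rewrite -eab leNgt; apply/negP => neg_k.
set x' := hinv phi x in pa; set psi := conjh phi t in hpsi.
have psix : psi x' = x' by rewrite /psi /conjh /x' hKinv tx.
have lt_ab : size a < size b by lia.
have contract := attracting_fixpoint psix pa hpsi lt_ab.
have [n rep] := repelling_fixpoint tx ht.
pose z : C := fun i => if i == size a then ~~ x' i else x' i.
have az : agree (size a) z x' by move=> i hi; rewrite /z ltn_eqF.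
have orbit_ne j : iter j psi z <> x'.
  elim: j => [|j IH] /=.
    by move/(congr1 (fun y => y (size a))); rewrite /z eqxx; case: (x' _).
  rewrite -[X in _ <> X]psix => /(cylmap_inj hpsi); apply: contra_not IH => /(_ _ pa); apply.
  by apply: prefixb_agree pa (agree_le _ (contract z j az)); rewrite leq_addr.
have [M hM] := hfun_agree phi x' n.
apply: (orbit_ne M); apply: (can_inj (hK phi)); rewrite /x' hKinv; apply: rep => m.
rewrite -hfun_iter_conjh -iterD -[x](hKinv phi); apply: hM.
by apply: agree_le (contract z _ az); lia.
Qed.

Section Rigidity.

Variables (phi : homeo) (x : C) (t : C -> C) (s : int).
Hypotheses (tx : t x = x) (ht : local_slope t x 1)
  (hs : local_slope (conjh phi t) (hinv phi x) s).

Lemma local_slope_comp_iter f k n : local_slope f x k ->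
  local_slope (f \o iter n t) x (n%:Z + k)%R.
Proof.
move=> hf; have := local_slope_comp (local_slope_iter n tx ht).
by rewrite iter_fixed // mulr1; apply.
Qed.

Lemma conjh_slope_comp_iter f k n : local_slope (conjh phi f) (hinv phi x) k ->
  local_slope (conjh phi (f \o iter n t)) (hinv phi x) (n%:Z * s + k)%R.
Proof.
have cx : conjh phi t (hinv phi x) = hinv phi x by rewrite /conjh hKinv tx.
move=> hf; rewrite conjh_comp conjh_iter.
by apply: local_slope_comp (local_slope_iter n cx hs) _; rewrite iter_fixed.
Qed.

(* f o t^n and g o t^m have the same germ at x, hence so do their conjugates. *)
Lemma conjh_slope_balance f g kf kg kf' kg' (n m : nat) : f x = g x ->
  local_slope f x kf -> local_slope g x kg ->
  local_slope (conjh phi f) (hinv phi x) kf' -> local_slope (conjh phi g) (hinv phi x) kg' ->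
  (kf + n = kg + m)%R -> (kf' + n%:Z * s = kg' + m%:Z * s)%R.
Proof.
move=> fg hf hg hf' hg' e.
have germ : locally_eq (f \o iter n t) (g \o iter m t) x.
  apply: local_slope_germ (local_slope_comp_iter n hf) _ _; last by rewrite /= !iter_fixed.
  by rewrite addrC e addrC; apply: local_slope_comp_iter.
have := local_slope_locally_eq (locally_eq_conjh phi germ) (conjh_slope_comp_iter n hf').
by move/(local_slope_uniq (conjh_slope_comp_iter m hg')) => e'; rewrite addrC -e' addrC.
Qed.

Lemma conjh_slope_fixpoint f k k' : f x = x -> local_slope f x k ->
  local_slope (conjh phi f) (hinv phi x) k' -> k' = (k * s)%R.
Proof.
move=> fx hf hf'.
have hid y : local_slope id y 0 by exists [::], [::].
have hid' := hid (hinv phi x); rewrite -(conjh_id phi) in hid'.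
case: k hf => n hf.
  have := conjh_slope_balance (n := 0) (m := n) fx hf (hid x) hf' hid'.
  by move=> /(_ (addrC _ _)); lia.
have := conjh_slope_balance (n := n.+1) (m := 0) fx hf (hid x) hf' hid'.
rewrite NegzE; lia.
Qed.

End Rigidity.

Lemma conjh_slope_expanding (phi : homeo) t x s : StabN phi -> Q2 x ->
  t x = x -> local_slope t x 1 -> local_slope (conjh phi t) (hinv phi x) s -> s = 1%R.
Proof.
move=> hS hQ tx ht hs.
have [t' [Vt' t'x ht']] := Q2_expanding_fixer (StabN_Q2 hS hQ).
pose g z := hfun phi (t' (hinv phi z)).
have gx : g x = x by rewrite /g t'x hKinv.
have conj_g : conjh phi g = t'.
  by apply: functional_extensionality => z; rewrite /conjh /g !hK.
have := conjh_slope_fixpoint tx ht hs gx (logslopeP x (StabN_conjh_inv hS Vt')).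
rewrite conj_g => /(_ _ ht') /esym /intUnitRing.unitzPl /orP[/eqP //|/eqP s_eq].
by have := conjh_slope_nonneg tx ht hs; rewrite s_eq.
Qed.

Lemma conjh_slope_diff (phi : homeo) x f g kf kg kf' kg' : StabN phi -> Q2 x ->
  f x = g x -> local_slope f x kf -> local_slope g x kg ->
  local_slope (conjh phi f) (hinv phi x) kf' -> local_slope (conjh phi g) (hinv phi x) kg' ->
  (kf' - kf = kg' - kg)%R.
Proof.
move=> hS hQ fg hf hg hf' hg'.
have [t [Vt tx ht]] := Q2_expanding_fixer hQ.
have hs := logslopeP (hinv phi x) (StabN_conjh hS Vt).
have [n [m e]] : exists n m : nat, (kf + n = kg + m)%R.
  by case E: (kg - kf)%R => [p|p]; [exists p, 0 | exists 0, p.+1]; lia.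
have := conjh_slope_balance tx ht hs fg hf hg hf' hg' e.
by rewrite (conjh_slope_expanding hS hQ tx ht hs) !mulr1; lia.
Qed.

Lemma Delta_eq (phi : homeo) x v w : StabN phi -> Q2 x -> inV v -> inV w ->
  v x = w x -> Delta phi v x = Delta phi w x.
Proof.
move=> hS hQ Hv Hw vw; apply: (conjh_slope_diff hS hQ vw); apply: logslopeP => //;
  exact: StabN_conjh.
Qed.

Lemma gamma_spec (phi : homeo) y : Q2 y ->
  exists u, [/\ inV u, u zero = y & gamma phi y = Delta phi u zero].
Proof.
move=> /V_transitive_Q2 H; rewrite /gamma; case: excluded_middle_informative => // H'.
have [Hu uy] := proj2_sig (constructive_indefinite_description _ H').
by exists (proj1_sig (constructive_indefinite_description _ H')).
Qed.

Lemma gammaE (phi : homeo) u : StabN phi -> inV u -> gamma phi (u zero) = Delta phi u zero.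
Proof.
move=> hS Hu; have [u0 [Hu0 u0z ->]] := gamma_spec phi (inV_Q2 Hu Q2_zero).
exact: Delta_eq Q2_zero Hu0 Hu u0z.
Qed.

Lemma gamma_cocycle (phi : homeo) x v : StabN phi -> Q2 x -> inV v ->
  (gamma phi (v x) - gamma phi x = Delta phi v x)%R.
Proof.
move=> hS hQ Hv.
have [u [Hu ux]] := V_transitive_Q2 hQ; subst x.
have [u2 [Hu2 u2x]] := V_transitive_Q2 (inV_Q2 Hv hQ).
rewrite -u2x !gammaE //.
have hvu := local_slope_comp (logslopeP zero Hu) (logslopeP (u zero) Hv).
have cu0 : conjh phi u (hinv phi zero) = hinv phi (u zero) by rewrite /conjh hKinv.
have := local_slope_comp (logslopeP (hinv phi zero) (StabN_conjh hS Hu))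
  (logslopeP (conjh phi u (hinv phi zero)) (StabN_conjh hS Hv)).
rewrite cu0 -conjh_comp => hcvu.
have := conjh_slope_diff hS Q2_zero u2x (logslopeP _ Hu2) hvu
  (logslopeP _ (StabN_conjh hS Hu2)) hcvu.
by rewrite /Delta; lia.
Qed.

Lemma Delta_hcomp (phi varphi : homeo) v x :
  Delta (hcomp phi varphi) v x =
  (Delta varphi (conjh phi v) (hinv phi x) + Delta phi v x)%R.
Proof.
rewrite /Delta.
have -> : conjh (hcomp phi varphi) v = conjh varphi (conjh phi v) by [].
have -> : hinv (hcomp phi varphi) x = hinv varphi (hinv phi x) by [].
lia.
Qed.

Local Open Scope ring_scope.

Theorem mainTheorem14 (phi varphi : homeo) :
  StabN phi -> StabN varphi ->
  forall (x : C), Q2 x -> forall v w : C -> C, inV v -> inV w ->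
  [/\ (v x = w x -> Delta varphi v x = Delta varphi w x),
      (forall (y : C) (u : C -> C), Q2 y -> inV u -> u zero = y ->
         gamma varphi y = Delta varphi u zero),
      gamma varphi (v x) - gamma varphi x = Delta varphi v x &
      (forall y : C, Q2 y ->
         gamma (hcomp phi varphi) y =
         gamma phi y + gamma varphi (hinv phi y) - gamma varphi (hinv phi zero))].
Proof.
move=> hP hV x hQ v w Hv Hw; split.
- exact: Delta_eq.
- by move=> y u _ Hu <-; apply: gammaE.
- exact: gamma_cocycle.
move=> y hy; have [u [Hu <- ->]] := gamma_spec (hcomp phi varphi) hy.
have cu0 : conjh phi u (hinv phi zero) = hinv phi (u zero) by rewrite /conjh hKinv.
have := gamma_cocycle hV (StabN_Q2 hP Q2_zero) (StabN_conjh hP Hu).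
by rewrite Delta_hcomp (gammaE hP Hu) cu0 => <-; lia.
Qed.
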